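(* There is an absolute constant $c>0$ such that the following holds. Let $t,n,k\ge1$ and $d\ge0$ be integers with $(d+1)\mid t$ and $k(d+1)\ge 4$. Then every $d$-runlength constrained $k$-disjunct binary $t\times n$ matrix satisfies $$t\ge\min\left(n,\;c\,\frac{k(d+1)\log n}{\log(k(d+1))}\right).$$ (In the paper's notation: $t\ge\min\big(n,\Omega\big(\tfrac{k d\log n}{\log(kd)}\big)\big)$.)
   Context: $\log$ denotes the base-2 logarithm. A binary $t\times n$ matrix $M$ is $d$-runlength constrained if in every column, any two $1$'s are separated by a run of at least $d$ zeros, i.e. $M_{ij}=M_{i'j}=1$ with $i<i'$ implies $i'-i\ge d+1$. A binary matrix $M$ is $k$-disjunct if for every column $j$ and every set $S$ of at most $k$ columns with $j\notin S$, $\mathsf{supp}(M_{\cdot j})\not\subseteq\bigcup_{j'\in S}\mathsf{supp}(M_{\cdot j'})$, where $\mathsf{supp}$ denotes the support. *)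

(* binary t x n matrices as functions nat -> nat -> bool,
   entries outside [0,t) x [0,n) are ignored. *)
From Stdlib Require Import Reals Arith List.
Open Scope R_scope.

Definition log2 (x : R) : R := ln x / ln 2.

Definition runlength_constrained (t n d : nat) (M : nat -> nat -> bool) : Prop :=
  forall j i i' : nat, (j < n)%nat -> (i < i')%nat -> (i' < t)%nat ->
    M i j = true -> M i' j = true -> (d + 1 <= i' - i)%nat.

(* M is k-disjunct: for every column j and every set S of at most k columns
   (given as a list; duplicates are harmless) with j not in S, the support of
   column j is not contained in the union of supports of the columns in S. *)
Definition disjunct (t n k : nat) (M : nat -> nat -> bool) : Prop :=
  forall (j : nat) (S : list nat), (j < n)%nat ->
    (forall j', In j' S -> (j' < n)%nat) -> (length S <= k)%nat -> ~ In j S ->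
    exists i : nat, (i < t)%nat /\ M i j = true /\
      (forall j', In j' S -> M i j' = false).

(* For each column j, disjunctness yields one of the k row classes (blocks of d+1
   consecutive rows, coloured cyclically by k colours) whose rows hit by column j
   already isolate j: any other column misses one of them (otherwise k columns, one
   covering each class, would cover column j).  Inside each superblock of
   K = k(d+1) rows a class is a single block of d+1 rows, so by the runlength
   constraint column j has at most one 1 there.  Hence j is determined by a choice of
   at most one row in each of the t/K + 1 superblocks, giving n < (K + 1)^(t/K + 1),
   i.e. K log n <= 4 t log K once t >= K. *)

From Stdlib Require Import Reals Arith Bool List Lia Lra Psatz Classical ClassicalEpsilon.
Open Scope nat_scope.

Lemma runlength_same_block t n d M j i i' :
  runlength_constrained t n d M -> j < n -> i < t -> i' < t ->
  M i j = true -> M i' j = true -> i / (d + 1) = i' / (d + 1) -> i = i'.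
Proof.
  intros Hrl Hj Hi Hi' HM HM' Hq.
  pose proof (Nat.div_mod i (d + 1) ltac:(lia)).
  pose proof (Nat.div_mod i' (d + 1) ltac:(lia)).
  pose proof (Nat.mod_upper_bound i (d + 1) ltac:(lia)).
  pose proof (Nat.mod_upper_bound i' (d + 1) ltac:(lia)).
  destruct (Nat.lt_total i i') as [Hlt|[Heq|Hlt]]; [| exact Heq |].
  - pose proof (Hrl j i i' Hj Hlt Hi' HM HM'); lia.
  - pose proof (Hrl j i' i Hj Hlt Hi HM' HM); lia.
Qed.

Lemma runlength_same_class t n k d M j i i' :
  runlength_constrained t n d M -> j < n -> i < t -> i' < t ->
  M i j = true -> M i' j = true ->
  i / (k * (d + 1)) = i' / (k * (d + 1)) ->
  (i / (d + 1)) mod k = (i' / (d + 1)) mod k -> i = i'.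
Proof.
  intros Hrl Hj Hi Hi' HM HM' Hb Hr.
  apply (runlength_same_block t n d M j i i'); try assumption.
  rewrite (Nat.div_mod_eq (i / (d + 1)) k), (Nat.div_mod_eq (i' / (d + 1)) k).
  rewrite !Nat.Div0.div_div, (Nat.mul_comm (d + 1) k), Hb, Hr.
  reflexivity.
Qed.

Definition isolates (n : nat) (M : nat -> nat -> bool) (j : nat) (P : nat -> bool) : Prop :=
  (forall i, P i = true -> M i j = true) /\
  (forall j', j' < n -> j' <> j -> exists i, P i = true /\ M i j' = false).

Lemma isolates_ext n M j P Q :
  (forall i, P i = Q i) -> isolates n M j P -> isolates n M j Q.
Proof.
  intros HPQ [Hsub Hsep]; split.
  - intros i Hi; apply Hsub; rewrite HPQ; exact Hi.
  - intros j' Hj' Hne; destruct (Hsep j' Hj' Hne) as [i [Hi HM]].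
    exists i; rewrite <- HPQ; split; assumption.
Qed.

Lemma isolates_inj n M P j1 j2 :
  j1 < n -> j2 < n -> isolates n M j1 P -> isolates n M j2 P -> j1 = j2.
Proof.
  intros H1 H2 [Hsub1 _] [_ Hsep2].
  destruct (Nat.eq_dec j1 j2) as [|Hne]; [assumption | exfalso].
  destruct (Hsep2 j1 H1 Hne) as [i [Hi HM]].
  rewrite (Hsub1 i Hi) in HM; discriminate.
Qed.

Lemma isolates_nonempty n M j P j' :
  j' < n -> j' <> j -> isolates n M j P -> exists i, P i = true.
Proof.
  intros Hj' Hne [_ Hsep]; destruct (Hsep j' Hj' Hne) as [i [Hi _]].
  exists i; exact Hi.
Qed.

Section ClassCover.

Variables (t n : nat) (M : nat -> nat -> bool) (cls : nat -> nat) (j : nat).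

Definition class_rows (r : nat) (i : nat) : bool :=
  (i <? t) && M i j && (cls i =? r).

Lemma class_rows_spec r i :
  class_rows r i = true <-> i < t /\ M i j = true /\ cls i = r.
Proof.
  unfold class_rows; rewrite !andb_true_iff, Nat.ltb_lt, Nat.eqb_eq; tauto.
Qed.

Lemma cover_classes k :
  (forall r, r < k -> exists x, x < n /\ x <> j /\
     forall i, class_rows r i = true -> M i x = true) ->
  exists S, length S <= k /\ (forall x, In x S -> x < n /\ x <> j) /\
    forall i, i < t -> M i j = true -> cls i < k -> exists x, In x S /\ M i x = true.
Proof.
  induction k as [|k IH]; intros Hcov.
  - exists nil; simpl; repeat split; intros; lia || tauto.
  - destruct IH as [S [HS [HSn HSc]]]; [intros r Hr; apply Hcov; lia|].
    destruct (Hcov k ltac:(lia)) as [x [Hx [Hxj Hxc]]].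
    exists (x :: S); split; [simpl; lia|]; split.
    + intros y [<-|Hy]; [split; assumption | apply HSn, Hy].
    + intros i Hi HM Hcls.
      destruct (Nat.eq_dec (cls i) k) as [Heq|Hne].
      * exists x; split; [left; reflexivity|].
        apply Hxc, class_rows_spec; auto.
      * destruct (HSc i Hi HM ltac:(lia)) as [y [Hy HMy]].
        exists y; split; [right|]; assumption.
Qed.

Lemma disjunct_isolating_class k :
  disjunct t n k M -> (forall i, cls i < k) -> j < n ->
  exists r, isolates n M j (class_rows r).
Proof.
  intros Hdis Hcls Hj.
  apply NNPP; intros Hno.
  assert (Hcov : forall r, r < k -> exists x, x < n /\ x <> j /\
            forall i, class_rows r i = true -> M i x = true).
  { intros r _; apply NNPP; intros Hnx; apply Hno; exists r; split.
    - intros i Hi; apply class_rows_spec in Hi; tauto.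
    - intros x Hx Hxj; apply NNPP; intros Hsep; apply Hnx.
      exists x; repeat split; try assumption.
      intros i Hi; destruct (M i x) eqn:E; [reflexivity|].
      exfalso; apply Hsep; exists i; split; assumption. }
  destruct (cover_classes k Hcov) as [S [HS [HSn HSc]]].
  destruct (Hdis j S Hj (fun x Hx => proj1 (HSn x Hx)) HS
              (fun H => proj2 (HSn j H) eq_refl)) as [i [Hi [HM Hz]]].
  destruct (HSc i Hi HM (Hcls i)) as [x [Hx HMx]].
  rewrite Hz in HMx by exact Hx; discriminate.
Qed.

End ClassCover.

Definition digit (B c b : nat) : nat := (c / B ^ b) mod B.

Lemma digit_expansion_exists (B s : nat) (dg : nat -> nat) :
  0 < B -> (forall b, dg b < B) ->
  exists c, c < B ^ s /\ forall b, b < s -> digit B c b = dg b.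
Proof.
  intros HB Hdg; unfold digit; induction s as [|s [c [Hc Hdig]]].
  - exists 0; simpl; split; [lia | intros; lia].
  - exists (c + dg s * B ^ s); split.
    + simpl; specialize (Hdg s); nia.
    + intros b Hb.
      assert (HBb : B ^ b <> 0) by (apply Nat.pow_nonzero; lia).
      destruct (Nat.eq_dec b s) as [->|Hne].
      * rewrite Nat.div_add, Nat.div_small by assumption.
        apply Nat.mod_small, Hdg.
      * replace (dg s * B ^ s) with ((dg s * B ^ (s - b - 1) * B) * B ^ b)
          by (rewrite <- !Nat.mul_assoc, <- Nat.pow_succ_r', <- Nat.pow_add_r;
              f_equal; f_equal; lia).
        rewrite Nat.div_add, Nat.Div0.mod_add by exact HBb.
        apply Hdig; lia.
Qed.

Lemma digit_beyond B c s b : 0 < B -> c < B ^ s -> s <= b -> digit B c b = 0.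
Proof.
  intros HB Hc Hb; unfold digit.
  rewrite Nat.div_small; [apply Nat.Div0.mod_0_l|].
  apply (Nat.lt_le_trans _ _ _ Hc), Nat.pow_le_mono_r; lia.
Qed.

(* The rows encoded by [c]: row [i] lies in superblock [i / K] at offset [i mod K],
   and is selected iff the digit of that superblock is [1 + i mod K] (digit 0 selects
   no row). *)
Definition code_rows (K B c i : nat) : bool := digit B c (i / K) =? S (i mod K).

Lemma code_rows_0 K B i : code_rows K B 0 i = false.
Proof. unfold code_rows, digit; rewrite Nat.Div0.div_0_l, Nat.Div0.mod_0_l; reflexivity. Qed.

Section Encoding.

Variables (K L s : nat) (P : nat -> bool).
Hypothesis K_gt0 : 0 < K.
Hypothesis L_le_K : L <= K.
Hypothesis P_bounded : forall i, P i = true -> i / K < s /\ i mod K < L.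
Hypothesis P_sparse : forall i i', P i = true -> P i' = true -> i / K = i' / K -> i = i'.

Let offset (b : nat) : option nat := find (fun p => P (b * K + p)) (seq 0 L).

Lemma offset_spec b p : offset b = Some p -> p < L /\ P (b * K + p) = true.
Proof.
  intros E; apply find_some in E as [Hin HP]; apply in_seq in Hin; split; [lia | exact HP].
Qed.

Lemma offset_of_row i : P i = true -> offset (i / K) = Some (i mod K).
Proof.
  intros HPi.
  assert (Hi : i = i / K * K + i mod K) by (rewrite Nat.mul_comm; apply Nat.div_mod; lia).
  destruct (offset (i / K)) as [p|] eqn:E.
  - apply offset_spec in E as [Hp HP].
    assert (Hq : (i / K * K + p) / K = i / K)
      by (rewrite Nat.div_add_l, (Nat.div_small p) by lia; lia).
    pose proof (P_sparse _ _ HP HPi Hq) as Heq; rewrite Hi in Heq at 2.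
    f_equal; eapply Nat.add_cancel_l; exact Heq.
  - exfalso; destruct (P_bounded i HPi) as [_ HL].
    pose proof (find_none _ _ E (i mod K) ltac:(apply in_seq; lia)) as F.
    cbv beta in F; rewrite <- Hi, HPi in F; discriminate.
Qed.

Lemma code_rows_exists : exists c, c < (L + 1) ^ s /\ forall i, code_rows K (L + 1) c i = P i.
Proof.
  set (dg b := match offset b with Some p => S p | None => 0 end).
  destruct (digit_expansion_exists (L + 1) s dg) as [c [Hc Hdig]]; [lia | |].
  { intros b; unfold dg; destruct (offset b) as [p|] eqn:E; [|lia].
    apply offset_spec in E; lia. }
  exists c; split; [exact Hc|]; intros i; unfold code_rows.
  destruct (P i) eqn:HPi.
  - rewrite Hdig by apply (P_bounded i HPi).
    unfold dg; rewrite offset_of_row by exact HPi; apply Nat.eqb_refl.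
  - apply Nat.eqb_neq; intros Hd.
    destruct (Nat.lt_ge_cases (i / K) s) as [Hb|Hb];
      [| rewrite (digit_beyond _ _ s) in Hd by (assumption || lia); discriminate].
    rewrite Hdig in Hd by exact Hb; unfold dg in Hd.
    destruct (offset (i / K)) as [p|] eqn:E; [|discriminate].
    injection Hd as ->; apply offset_spec in E as [_ HP].
    rewrite Nat.mul_comm, <- Nat.div_mod, HPi in HP by lia; discriminate.
Qed.

End Encoding.

Lemma pigeonhole_rel (R : nat -> nat -> Prop) n N :
  (forall j, j < n -> exists c, c < N /\ R j c) ->
  (forall j1 j2 c, j1 < n -> j2 < n -> R j1 c -> R j2 c -> j1 = j2) ->
  n <= N.
Proof.
  intros Hex Hinj.
  set (f j := epsilon (inhabits 0) (fun c => j < n -> c < N /\ R j c)).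
  assert (Hf : forall j, j < n -> f j < N /\ R j (f j)).
  { intros j Hj; apply (epsilon_spec (inhabits 0) (fun c => j < n -> c < N /\ R j c));
      [| exact Hj].
    destruct (Hex j Hj) as [c Hc]; exists c; intros _; exact Hc. }
  enough (H : length (map f (seq 0 n)) <= length (seq 0 N))
    by now rewrite length_map, !length_seq in H.
  apply NoDup_incl_length.
  - apply NoDup_map_NoDup_ForallPairs; [| apply seq_NoDup].
    intros a b Ha Hb E; apply in_seq in Ha, Hb.
    apply (Hinj a b (f a)); try lia; [apply Hf; lia | rewrite E; apply Hf; lia].
  - intros c Hc; apply in_map_iff in Hc as [j [<- Hj]]; apply in_seq in Hj.
    apply in_seq; split; [lia | apply Hf; lia].
Qed.

Section Columns.

Variables (t n k d : nat) (M : nat -> nat -> bool).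
Hypothesis k_ge1 : 1 <= k.
Hypothesis M_runlength : runlength_constrained t n d M.
Hypothesis M_disjunct : disjunct t n k M.

Let K := k * (d + 1).
(* Offsets of rows below [t] are also below [t]; this makes the bound read [n <= t]
   when [t < K]. *)
Let L := Nat.min K t.
Let s := t / K + 1.

Lemma column_isolated_by_code j : j < n ->
  exists c, c < (L + 1) ^ s /\ isolates n M j (code_rows K (L + 1) c).
Proof.
  intros Hj.
  set (cls i := (i / (d + 1)) mod k).
  destruct (disjunct_isolating_class t n M cls j k M_disjunct) as [r Hr]; [|exact Hj|].
  { intros i; apply Nat.mod_upper_bound; lia. }
  destruct (code_rows_exists K L s (class_rows t M cls j r)) as [c [Hc Hcode]].
  - unfold K; lia.
  - apply Nat.le_min_l.
  - intros i Hi; apply class_rows_spec in Hi as [Hit _].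
    pose proof (Nat.Div0.div_le_mono i t K ltac:(lia)).
    pose proof (Nat.mod_upper_bound i K ltac:(unfold K; lia)).
    pose proof (Nat.Div0.mod_le i K).
    unfold L, s; lia.
  - intros i i' Hi Hi' Hb; apply class_rows_spec in Hi as [Hit [HM Hcls]].
    apply class_rows_spec in Hi' as [Hit' [HM' Hcls']].
    apply (runlength_same_class t n k d M j i i'); [assumption .. |].
    exact (eq_trans Hcls (eq_sym Hcls')).
  - exists c; split; [exact Hc|].
    apply (isolates_ext _ _ _ _ _ (fun i => eq_sym (Hcode i)) Hr).
Qed.

Lemma runlength_disjunct_columns_lt : 2 <= n -> n < (L + 1) ^ s.
Proof.
  intros Hn.
  assert (Hcodes : n <= (L + 1) ^ s - 1).
  { apply (pigeonhole_rel (fun j c => isolates n M j (code_rows K (L + 1) (S c)))).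
    - intros j Hj; destruct (column_isolated_by_code j Hj) as [c [Hc Hiso]].
      destruct c as [|c].
      + exfalso.
        assert (Hother : exists j', j' < n /\ j' <> j)
          by (destruct (Nat.eq_dec j 0); [exists 1 | exists 0]; lia).
        destruct Hother as [j' [Hj' Hne]].
        destruct (isolates_nonempty n M j _ j' Hj' Hne Hiso) as [i Hi].
        rewrite code_rows_0 in Hi; discriminate.
      + exists c; split; [lia | exact Hiso].
    - intros j1 j2 c H1 H2; apply isolates_inj; assumption. }
  lia.
Qed.

End Columns.

Open Scope R_scope.

Lemma ln_le_compat x y : 0 < x -> x <= y -> ln x <= ln y.
Proof.
  intros Hx [Hlt|<-]; [left; apply ln_increasing; assumption | right; reflexivity].
Qed.

Lemma ln_pos x : 1 < x -> 0 < ln x.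
Proof. intros Hx; rewrite <- ln_1; apply ln_increasing; lra. Qed.

Lemma ln_succ_le_twice x : 2 <= x -> ln (x + 1) <= 2 * ln x.
Proof.
  intros Hx; replace (2 * ln x) with (ln (x * x)) by (rewrite ln_mult by lra; ring).
  apply ln_le_compat; nra.
Qed.

Lemma ln_le_of_le_pow (n K s : nat) :
  (1 <= n)%nat -> (n <= (K + 1) ^ s)%nat -> ln (INR n) <= INR s * ln (INR K + 1).
Proof.
  intros Hn Hpow.
  assert (HK : 0 < INR K + 1) by (pose proof (pos_INR K); lra).
  rewrite <- ln_pow by exact HK.
  apply ln_le_compat; [apply lt_0_INR; lia|].
  replace (INR K + 1) with (INR (K + 1)) by (rewrite plus_INR; reflexivity).
  rewrite <- pow_INR; apply le_INR, Hpow.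
Qed.

Lemma scaled_ln_le (K n s t : nat) :
  (2 <= K)%nat -> (1 <= n)%nat -> (n <= (K + 1) ^ s)%nat -> (s * K <= 2 * t)%nat ->
  INR K * ln (INR n) <= 4 * INR t * ln (INR K).
Proof.
  intros HK Hn Hpow HsK.
  assert (HKr : 2 <= INR K) by (replace 2 with (INR 2) by reflexivity; apply le_INR, HK).
  assert (HsKr : INR s * INR K <= 2 * INR t)
    by (rewrite <- mult_INR; replace 2 with (INR 2) by reflexivity;
        rewrite <- mult_INR; apply le_INR, HsK).
  pose proof (ln_le_of_le_pow n K s Hn Hpow) as Hln.
  pose proof (ln_succ_le_twice (INR K) HKr) as Hsucc.
  pose proof (ln_pos (INR K) ltac:(lra)) as HlnK.
  pose proof (pos_INR s).
  apply (Rle_trans _ (INR K * (INR s * (2 * ln (INR K))))); [|nra].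
  apply Rmult_le_compat_l; [lra|].
  apply (Rle_trans _ _ _ Hln), Rmult_le_compat_l; assumption.
Qed.

Theorem theorem3 :
  exists c : R, 0 < c /\
    forall (t n k d : nat) (M : nat -> nat -> bool),
      (1 <= t)%nat -> (1 <= n)%nat -> (1 <= k)%nat ->
      Nat.divide (d + 1) t -> (4 <= k * (d + 1))%nat ->
      runlength_constrained t n d M -> disjunct t n k M ->
      Rmin (INR n) (c * INR (k * (d + 1)) * log2 (INR n) / log2 (INR (k * (d + 1))))
        <= INR t.
Proof.
  exists (1 / 4); split; [lra|].
  intros t n k d M Ht Hn Hk _ HK Hrl Hdis.
  destruct (Nat.le_gt_cases n t) as [Hnt|Htn].
  { apply (Rle_trans _ _ _ (Rmin_l _ _)), le_INR, Hnt. }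
  apply (Rle_trans _ _ _ (Rmin_r _ _)).
  pose proof (runlength_disjunct_columns_lt t n k d M Hk Hrl Hdis ltac:(lia)) as Hcodes.
  set (K := (k * (d + 1))%nat) in *.
  destruct (Nat.lt_ge_cases t K) as [HtK|HKt].
  { rewrite Nat.min_r, Nat.div_small in Hcodes by lia; simpl in Hcodes; lia. }
  rewrite Nat.min_l in Hcodes by exact HKt.
  assert (Hbound : INR K * ln (INR n) <= 4 * INR t * ln (INR K)).
  { apply (scaled_ln_le K n (t / K + 1) t); try lia.
    pose proof (Nat.Div0.mul_div_le t K); nia. }
  assert (HKr : 4 <= INR K) by (replace 4 with (INR 4) by (simpl; lra); apply le_INR, HK).
  pose proof (ln_pos (INR K) ltac:(lra)).
  pose proof (ln_pos 2 ltac:(lra)).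
  unfold log2; apply (Rmult_le_reg_r (4 * ln (INR K))); [lra|].
  replace (1 / 4 * INR K * (ln (INR n) / ln 2) / (ln (INR K) / ln 2) * (4 * ln (INR K)))
    with (INR K * ln (INR n)) by (field; lra).
  lra.
Qed.
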